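(* Let $\odot$ be a pseudo-multiplication and let $\nu,\tau$ be $\sigma$-maxitive measures on a $\sigma$-algebra $\mathcal{B}$ on a nonempty set $E$. Assume that $\nu$ is semi-$\odot$-finite and that $\nu$ admits a density $c$ with respect to $\tau$. Then $\nu$ admits a density with respect to $\tau$ taking only $\odot$-finite values.
   Context: Write $\overline{\mathbb{R}}_+=[0,\infty]$ and $\oplus$ for the supremum. A pseudo-multiplication is a binary operation $\odot$ on $\overline{\mathbb{R}}_+$ with the following properties: - it is associative; - it is continuous on $(0,\infty)\times[0,\infty]$; - for every $t$, the map $s\mapsto s\odot t$ is continuous on $(0,\infty]$; - it is nondecreasing in each argument; - it has a left identity $1_\odot$, i.e. $1_\odot\odot t=t$ for all $t$; - it has no zero divisors, i.e. $s\odot t=0$ implies $s=0$ or $t=0$; - $0\odot t=t\odot 0=0$ for all $t$. Put $O(t)=\inf_{s>0}s\odot t$. An element $t$ is $\odot$-finite if $O(t)=0$, and $\odot$-infinite otherwise. A $\sigma$-maxitive measure on $\mathcal{B}$ is a map $\nu:\mathcal{B}\to\overline{\mathbb{R}}_+$ with $\nu(\emptyset)=0$ and $\nu(\bigcup_{j\in J}B_j)=\sup_{j\in J}\nu(B_j)$ for every countable family $(B_j)$ in $\mathcal{B}$. A map $f:E\to\overline{\mathbb{R}}_+$ is $\mathcal{B}$-measurable if $\{f>t\}\in\mathcal{B}$ for all $t\in[0,\infty)$. The idempotent $\odot$-integral is $\int^\infty_B f\odot d\tau=\sup_{t\in[0,\infty)}t\odot\tau(B\cap\{f>t\})$. $\nu$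 has a density with respect to $\tau$ if there is a $\mathcal{B}$-measurable $c:E\to\overline{\mathbb{R}}_+$ with $\nu(B)=\int^\infty_B c\odot d\tau$ for all $B\in\mathcal{B}$. $\nu$ is semi-$\odot$-finite if, for all $B\in\mathcal{B}$, $\nu(B)=\sup\{\nu(A):A\in\mathcal{B},\,A\subset B,\,\nu(A)\text{ is }\odot\text{-finite}\}$. *)

From Stdlib Require Import Reals.
Open Scope R_scope.

Inductive ER : Type := Fin (r : R) | PInf.

Definition ER_le (x y : ER) : Prop :=
  match x, y with
  | Fin a, Fin b => a <= b
  | _, PInf => True
  | PInf, Fin _ => False
  end.

Definition ER_lt (x y : ER) : Prop :=
  match x, y with
  | Fin a, Fin b => a < b
  | Fin _, PInf => True
  | PInf, _ => False
  end.

Definition Rp : Type := { x : ER | ER_le (Fin 0) x }.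

Definition Rp_le (x y : Rp) : Prop := ER_le (proj1_sig x) (proj1_sig y).
Definition Rp_lt (x y : Rp) : Prop := ER_lt (proj1_sig x) (proj1_sig y).

Definition Rp0 : Rp := exist _ (Fin 0) (Rle_refl 0).

Definition Rp_finite (x : Rp) : Prop := exists r : R, proj1_sig x = Fin r.

Definition is_sup (S : Rp -> Prop) (m : Rp) : Prop :=
  (forall y, S y -> Rp_le y m) /\
  (forall z, (forall y, S y -> Rp_le y z) -> Rp_le m z).

Definition is_inf (S : Rp -> Prop) (m : Rp) : Prop :=
  (forall y, S y -> Rp_le m y) /\
  (forall z, (forall y, S y -> Rp_le z y) -> Rp_le z m).

Definition nbhd (x : Rp) (P : Rp -> Prop) : Prop :=
  match proj1_sig x with
  | Fin r => exists eps : R, 0 < eps /\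
      forall y : Rp, (match proj1_sig y with
                      | Fin r' => Rabs (r' - r) < eps
                      | PInf => False end) -> P y
  | PInf => exists M : R, forall y : Rp, ER_lt (Fin M) (proj1_sig y) -> P y
  end.

Definition continuous2_at (f : Rp -> Rp -> Rp) (s t : Rp) : Prop :=
  forall P, nbhd (f s t) P ->
    exists U W, nbhd s U /\ nbhd t W /\
      forall s' t', U s' -> W t' -> P (f s' t').

Definition continuous_at (g : Rp -> Rp) (s : Rp) : Prop :=
  forall P, nbhd (g s) P -> nbhd s (fun s' => P (g s')).

Definition pseudo_mult (odot : Rp -> Rp -> Rp) : Prop :=
  (forall a b c, odot (odot a b) c = odot a (odot b c)) /\
  (* continuous on (0,∞) × [0,∞] (an open subset of [0,∞]²) *)
  (forall s t, Rp_lt Rp0 s -> Rp_finite s -> continuous2_at odot s t) /\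
  (* for every t, s ↦ s ⊙ t continuous on (0,∞] (open in [0,∞]) *)
  (forall t s, Rp_lt Rp0 s -> continuous_at (fun s' => odot s' t) s) /\
  (forall s s' t, Rp_le s s' -> Rp_le (odot s t) (odot s' t)) /\
  (forall s t t', Rp_le t t' -> Rp_le (odot s t) (odot s t')) /\
  (exists one : Rp, forall t, odot one t = t) /\
  (forall s t, odot s t = Rp0 -> s = Rp0 \/ t = Rp0) /\
  (forall t, odot Rp0 t = Rp0 /\ odot t Rp0 = Rp0).

Definition odot_finite (odot : Rp -> Rp -> Rp) (t : Rp) : Prop :=
  is_inf (fun y => exists s : Rp, Rp_lt Rp0 s /\ y = odot s t) Rp0.

Definition sigma_algebra {E : Type} (B : (E -> Prop) -> Prop) : Prop :=
  B (fun _ => True) /\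
  (forall A, B A -> B (fun x => ~ A x)) /\
  (forall A : nat -> E -> Prop, (forall n, B (A n)) ->
     B (fun x => exists n, A n x)).

Definition countable (J : Type) : Prop :=
  exists f : J -> nat, forall i j, f i = f j -> i = j.

Definition sigma_maxitive {E : Type} (B : (E -> Prop) -> Prop)
  (nu : (E -> Prop) -> Rp) : Prop :=
  nu (fun _ => False) = Rp0 /\
  forall (J : Type) (Bj : J -> E -> Prop), countable J ->
    (forall j, B (Bj j)) ->
    is_sup (fun y => exists j, y = nu (Bj j)) (nu (fun x => exists j, Bj j x)).

Definition measurable {E : Type} (B : (E -> Prop) -> Prop) (f : E -> Rp) : Prop :=
  forall t : Rp, Rp_finite t -> B (fun x => Rp_lt t (f x)).

(** ∫^∞_A f ⊙ dτ is the sup of this set *)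
Definition integrand_set {E : Type} (odot : Rp -> Rp -> Rp)
  (tau : (E -> Prop) -> Rp) (f : E -> Rp) (A : E -> Prop) : Rp -> Prop :=
  fun y => exists t : Rp, Rp_finite t /\
    y = odot t (tau (fun x => A x /\ Rp_lt t (f x))).

Definition is_density {E : Type} (B : (E -> Prop) -> Prop) (odot : Rp -> Rp -> Rp)
  (nu tau : (E -> Prop) -> Rp) (c : E -> Rp) : Prop :=
  measurable B c /\
  forall A, B A -> is_sup (integrand_set odot tau c A) (nu A).

Definition semi_odot_finite {E : Type} (B : (E -> Prop) -> Prop)
  (odot : Rp -> Rp -> Rp) (nu : (E -> Prop) -> Rp) : Prop :=
  forall A, B A ->
    is_sup (fun y => exists A', B A' /\ (forall x, A' x -> A x) /\
                         odot_finite odot (nu A') /\ y = nu A') (nu A).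

(** Let [c] be a density of [nu] with respect to [tau] and let [N] be the set
    where [c] takes ⊙-infinite values.  The proof shows that [N] is [tau]-null
    inside every measurable set of ⊙-finite [nu]-measure; as [nu] is
    semi-⊙-finite, replacing [c] by [0] on [N] then yields a new density.

    - The ⊙-finite values form a down-set of [[0,∞]], hence are of the form
      [[0,a)] or [[0,a]] ([downset_shape]); so [N] is [{c ≥ a}] or [{c > a}]
      and is measurable.
    - If [nu A'] is ⊙-finite and [a] is ⊙-infinite, then [a ⊙ tau D ≤ nu A']
      forces [tau D = 0] ([nonfinite_annihilates]).  For [D = A' ∩ {c > r}]
      this is immediate from the density inequality ([tau_null_strict]); for
      [D = A' ∩ {c ≥ a}] one first passes to the limit [r ↑ a] using the
      continuity of [s ↦ s ⊙ t] ([tau_null_ge]).  Together they give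
      [nonfinite_part_negligible].
    - Cutting a density down on such a negligible set keeps it a density
      ([density_off_negligible]), which proves [mainTheorem4]. *)

From Stdlib Require Import Reals Lra Classical ClassicalEpsilon
  FunctionalExtensionality PropExtensionality ProofIrrelevance.
Open Scope R_scope.

(** ** The order of [[0,∞]] *)

Lemma Rp_eq (x y : Rp) : proj1_sig x = proj1_sig y -> x = y.
Proof.
  destruct x as [x hx], y as [y hy]; simpl; intros ->; f_equal.
  apply proof_irrelevance.
Qed.

Definition RpInf : Rp := exist _ PInf I.

Definition clip (r : R) : Rp := exist _ (Fin (Rmax 0 r)) (Rmax_l 0 r).

Lemma clip_finite (r : R) : Rp_finite (clip r).
Proof. exists (Rmax 0 r); reflexivity. Qed.

Lemma le_refl (x : Rp) : Rp_le x x.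
Proof. unfold Rp_le; destruct x as [[a|] h]; simpl; [lra | exact I]. Qed.

Lemma le_trans (x y z : Rp) : Rp_le x y -> Rp_le y z -> Rp_le x z.
Proof.
  unfold Rp_le; destruct x as [[a|] ?], y as [[b|] ?], z as [[d|] ?]; simpl;
    intros; try lra; tauto.
Qed.

Lemma le_antisym (x y : Rp) : Rp_le x y -> Rp_le y x -> x = y.
Proof.
  intros H1 H2; apply Rp_eq; revert H1 H2; unfold Rp_le;
    destruct x as [[a|] ?], y as [[b|] ?]; simpl; intros; try tauto.
  f_equal; lra.
Qed.

Lemma le_total (x y : Rp) : Rp_le x y \/ Rp_lt y x.
Proof.
  unfold Rp_le, Rp_lt; destruct x as [[a|] ?], y as [[b|] ?]; simpl; auto.
  apply Rle_or_lt.
Qed.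

Lemma le0 (x : Rp) : Rp_le Rp0 x.
Proof. unfold Rp_le; destruct x as [[a|] h]; simpl in *; auto. Qed.

Lemma le_top (x : Rp) : Rp_le x RpInf.
Proof. unfold Rp_le; destruct x as [[a|] h]; exact I. Qed.

Lemma lt_not_le (x y : Rp) : Rp_lt x y -> ~ Rp_le y x.
Proof.
  unfold Rp_le, Rp_lt; destruct x as [[a|] ?], y as [[b|] ?]; simpl;
    intros; try tauto; lra.
Qed.

Lemma lt_le (x y : Rp) : Rp_lt x y -> Rp_le x y.
Proof.
  unfold Rp_le, Rp_lt; destruct x as [[a|] ?], y as [[b|] ?]; simpl;
    intros; try tauto; lra.
Qed.

Lemma lt_le_trans (x y z : Rp) : Rp_lt x y -> Rp_le y z -> Rp_lt x z.
Proof.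
  unfold Rp_le, Rp_lt; destruct x as [[a|] ?], y as [[b|] ?], z as [[d|] ?];
    simpl; intros; try lra; tauto.
Qed.

Lemma Rp_sup_exists (S : Rp -> Prop) : exists m, is_sup S m.
Proof.
  destruct (classic (exists y, S y /\ proj1_sig y = PInf)) as [[y [Sy Hy]] | Hnoinf].
  { exists RpInf; split; [intros z _; apply le_top |].
    intros z Hz; specialize (Hz y Sy); unfold Rp_le in *; rewrite Hy in Hz.
    destruct (proj1_sig z); simpl in *; tauto. }
  set (P := fun r => exists y, S y /\ proj1_sig y = Fin r).
  assert (Hfin : forall y, S y -> exists r, proj1_sig y = Fin r /\ P r).
  { intros y Sy; destruct (proj1_sig y) as [r|] eqn:Ey.
    - exists r; split; [reflexivity | exists y; auto].
    - exfalso; apply Hnoinf; eauto. }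
  assert (Hbound : forall z w, (forall y, S y -> Rp_le y z) -> proj1_sig z = Fin w ->
                               is_upper_bound P w).
  { intros z w Hz Ez r [y [Sy Hy]]; specialize (Hz y Sy).
    unfold Rp_le in Hz; rewrite Hy, Ez in Hz; exact Hz. }
  destruct (classic (exists r, P r)) as [Hne | Hemp].
  2:{ exists Rp0; split; [| intros z _; apply le0].
      intros y Sy; destruct (Hfin y Sy) as [r [_ Hr]]; exfalso; eauto. }
  destruct (classic (bound P)) as [Hb | Hnb].
  - destruct (completeness P Hb Hne) as [al [Hub Hlub]].
    assert (hal : ER_le (Fin 0) (Fin al)).
    { destruct Hne as [r Hr]; pose proof Hr as [y [_ Hy]].
      pose proof (proj2_sig y) as H0; rewrite Hy in H0; simpl in *.
      specialize (Hub r Hr); lra. }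
    exists (exist _ (Fin al) hal); split.
    + intros y Sy; destruct (Hfin y Sy) as [r [Hy Hr]].
      unfold Rp_le; rewrite Hy; simpl; auto.
    + intros z Hz; destruct z as [[w|] hz]; [| exact I].
      apply Hlub; eapply Hbound; [exact Hz | reflexivity].
  - exists RpInf; split; [intros z _; apply le_top |].
    intros z Hz; destruct z as [[w|] hz]; [| exact I].
    exfalso; apply Hnb; exists w; eapply Hbound; [exact Hz | reflexivity].
Qed.

Lemma below_sup (S : Rp -> Prop) (m x : Rp) :
  is_sup S m -> Rp_lt x m -> exists y, S y /\ Rp_lt x y.
Proof.
  intros [_ Hleast] Hx; apply NNPP; intros Hn.
  apply (lt_not_le _ _ Hx), Hleast; intros y Sy.
  destruct (le_total y x) as [| Hlt]; auto.
  exfalso; eauto.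
Qed.

Lemma downset_shape (F : Rp -> Prop) :
  (forall u v, Rp_le u v -> F v -> F u) ->
  (exists a, forall x, F x <-> Rp_lt x a) \/ (exists a, forall x, F x <-> Rp_le x a).
Proof.
  intros Hdown; destruct (Rp_sup_exists F) as [m Hm].
  destruct (classic (F m)) as [Fm | nFm].
  - right; exists m; intros x; split; [apply (proj1 Hm) | intros Hx; eauto].
  - left; exists m; intros x; split.
    + intros Fx; destruct (le_total m x) as [Hmx |]; auto.
      exfalso; apply nFm; rewrite (le_antisym m x Hmx (proj1 Hm x Fx)); exact Fx.
    + intros Hx; destruct (below_sup F m x Hm Hx) as [y [Fy Hxy]].
      exact (Hdown x y (lt_le _ _ Hxy) Fy).
Qed.

(** Approximation of [a > 0] from below by the finite values [lower a n],
    which turns [{c ≥ a}] into a countable intersection of sets [{c > r}]. *)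
Definition lower (a : Rp) (n : nat) : Rp :=
  match proj1_sig a with
  | Fin al => clip (al - / (INR n + 1))
  | PInf => clip (INR n)
  end.

Lemma lower_finite (a : Rp) (n : nat) : Rp_finite (lower a n).
Proof. unfold lower; destruct (proj1_sig a); apply clip_finite. Qed.

Lemma ge_iff_above_lower (a y : Rp) :
  Rp_lt Rp0 a -> (Rp_le a y <-> forall n, Rp_lt (lower a n) y).
Proof.
  unfold Rp_le, Rp_lt, lower; destruct a as [[al|] ha], y as [[v|] hv];
    simpl in *; intros Hpos; split; auto.
  - intros Hle n; pose proof (RinvN_pos n); apply Rmax_lub_lt; lra.
  - intros H; apply Rnot_lt_le; intros Hv.
    destruct (archimed_cor1 (al - v)) as [[|m] [Hm Hpos']]; [lra | inversion Hpos' |].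
    specialize (H m); rewrite S_INR in Hm; pose proof (Rmax_r 0 (al - / (INR m + 1))).
    lra.
  - intros [].
  - intros H; destruct (INR_unbounded v) as [n Hn].
    specialize (H n); pose proof (Rmax_r 0 (INR n)); lra.
Qed.

Lemma gt_iff_above_upper (a y : Rp) (al : R) :
  proj1_sig a = Fin al ->
  (Rp_lt a y <-> exists n, Rp_lt (clip (al + / (INR n + 1))) y).
Proof.
  intros Ea; pose proof (proj2_sig a) as ha; unfold Rp_lt; rewrite Ea in *.
  destruct y as [[v|] hv]; simpl in *.
  - split.
    + intros Hv; destruct (archimed_cor1 (v - al)) as [[|m] [Hm Hpos]]; [lra | inversion Hpos |].
      exists m; rewrite S_INR in Hm; pose proof (RinvN_pos m); apply Rmax_lub_lt; lra.
    + intros [n Hn]; pose proof (RinvN_pos n); pose proof (Rmax_r 0 (al + / (INR n + 1))).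
      lra.
  - split; [exists O | ]; auto.
Qed.

Lemma below_upper (a : Rp) (al : R) (n : nat) :
  proj1_sig a = Fin al -> Rp_lt a (clip (al + / (INR n + 1))).
Proof.
  unfold Rp_lt; intros Ea; rewrite Ea; simpl.
  pose proof (RinvN_pos n); pose proof (Rmax_r 0 (al + / (INR n + 1))); lra.
Qed.

(** ** Neighbourhoods and continuity *)

Lemma nbhd_above (w v : Rp) : Rp_lt w v -> nbhd v (fun y => Rp_lt w y).
Proof.
  unfold nbhd, Rp_lt; destruct v as [[v|] hv], w as [[w|] hw]; simpl; intros H; try tauto.
  - exists (v - w); split; [lra |].
    intros [[y|] hy]; simpl; [| tauto].
    intros Hy; apply Rabs_def2 in Hy; lra.
  - exists w; intros [[y|] hy]; simpl; auto.
Qed.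

Lemma nbhd_finite_below (a : Rp) (P : Rp -> Prop) :
  Rp_lt Rp0 a -> nbhd a P -> exists r, Rp_finite r /\ Rp_lt r a /\ P r.
Proof.
  unfold nbhd, Rp_lt; destruct a as [[al|] ha]; simpl; intros Hpos Hn.
  - destruct Hn as [eps [Heps Hq]].
    exists (clip (al - eps / 2)); split; [apply clip_finite | split].
    + simpl; apply Rmax_lub_lt; lra.
    + apply Hq; simpl; unfold Rmax; destruct (Rle_dec 0 (al - eps / 2));
        apply Rabs_def1; lra.
  - destruct Hn as [M Hq].
    exists (clip (Rabs M + 1)); split; [apply clip_finite | split; [exact I |]].
    apply Hq; simpl; pose proof (Rle_abs M); pose proof (Rmax_r 0 (Rabs M + 1)); lra.
Qed.

Lemma continuous_le_of_lower (g : Rp -> Rp) (a w : Rp) :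
  continuous_at g a -> Rp_lt Rp0 a ->
  (forall r, Rp_finite r -> Rp_lt r a -> Rp_le (g r) w) -> Rp_le (g a) w.
Proof.
  intros Hg Hpos Hlow; destruct (le_total (g a) w) as [| Hlt]; auto.
  destruct (nbhd_finite_below a _ Hpos (Hg _ (nbhd_above _ _ Hlt))) as [r [Hr [Hra Hw]]].
  exfalso; exact (lt_not_le _ _ Hw (Hlow r Hr Hra)).
Qed.

(** ** σ-algebras and σ-maxitive measures *)

Lemma set_ext {E : Type} (X Y : E -> Prop) : (forall x, X x <-> Y x) -> X = Y.
Proof.
  intros H; apply functional_extensionality; intros x.
  apply propositional_extensionality; auto.
Qed.

Section SigmaAlgebra.
Variables (E : Type) (B : (E -> Prop) -> Prop).

Lemma meas_ext (X Y : E -> Prop) : B X -> (forall x, X x <-> Y x) -> B Y.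
Proof. intros H e; rewrite <- (set_ext X Y e); exact H. Qed.

Hypothesis HB : sigma_algebra B.

Lemma meas_compl (X : E -> Prop) : B X -> B (fun x => ~ X x).
Proof. apply HB. Qed.

Lemma meas_countable_union (A : nat -> E -> Prop) :
  (forall n, B (A n)) -> B (fun x => exists n, A n x).
Proof. apply HB. Qed.

Lemma meas_empty : B (fun _ => False).
Proof.
  apply meas_ext with (fun x : E => ~ True); [apply meas_compl, HB | tauto].
Qed.

Lemma meas_countable_inter (A : nat -> E -> Prop) :
  (forall n, B (A n)) -> B (fun x => forall n, A n x).
Proof.
  intros HA; apply meas_ext with (fun x => ~ exists n, ~ A n x).
  - apply meas_compl, meas_countable_union; intros n; apply meas_compl, HA.
  - intros x; split; [intros H n; apply NNPP; eauto | intros H [n Hn]; auto].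
Qed.

Lemma meas_inter (X Y : E -> Prop) : B X -> B Y -> B (fun x => X x /\ Y x).
Proof.
  intros HX HY.
  apply meas_ext with (fun x => forall n : nat, match n with O => X x | _ => Y x end).
  - apply meas_countable_inter; intros [|n]; auto.
  - intros x; split; [intros H; exact (conj (H O) (H 1%nat)) | intros [H1 H2] [|n]; auto].
Qed.

Section Maxitive.
Variable mu : (E -> Prop) -> Rp.
Hypothesis Hmu : sigma_maxitive B mu.

Lemma countable_bool : countable bool.
Proof. exists (fun b : bool => if b then O else 1%nat); intros [|] [|]; simpl; congruence. Qed.

Lemma countable_nat : countable nat.
Proof. exists (fun n => n); auto. Qed.

Lemma mu_union2 (X Y : E -> Prop) :
  B X -> B Y -> is_sup (fun y => y = mu X \/ y = mu Y) (mu (fun x => X x \/ Y x)).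
Proof.
  intros HX HY.
  destruct (proj2 Hmu bool (fun b : bool => if b then X else Y) countable_bool) as [Hup Hleast].
  { intros [|]; auto. }
  replace (fun x => X x \/ Y x) with (fun x => exists j : bool, (if j then X else Y) x).
  - split.
    + intros y [-> | ->]; apply Hup; [exists true | exists false]; reflexivity.
    + intros z Hz; apply Hleast; intros y [[|] ->]; apply Hz; auto.
  - apply set_ext; intros x; split; [intros [[|] H]; auto | intros [H | H]].
    + exists true; exact H.
    + exists false; exact H.
Qed.

Lemma mu_mono (X Y : E -> Prop) :
  B X -> B Y -> (forall x, X x -> Y x) -> Rp_le (mu X) (mu Y).
Proof.
  intros HX HY Hsub; destruct (mu_union2 X Y HX HY) as [Hup _].
  assert (HXY : (fun x => X x \/ Y x) = Y).
  { apply set_ext; intros x; split; [intros [H | H] | intros H]; auto. }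
  rewrite <- HXY; apply Hup; auto.
Qed.

Lemma mu_remove_null (X N : E -> Prop) :
  B X -> B N -> mu (fun x => X x /\ N x) = Rp0 ->
  Rp_le (mu X) (mu (fun x => X x /\ ~ N x)).
Proof.
  intros HX HN H0.
  destruct (mu_union2 (fun x => X x /\ N x) (fun x => X x /\ ~ N x)) as [_ Hleast].
  - apply meas_inter; auto.
  - apply meas_inter; [| apply meas_compl]; auto.
  - replace X with (fun x => (X x /\ N x) \/ (X x /\ ~ N x)) at 1.
    + apply Hleast; intros y [-> | ->]; [rewrite H0; apply le0 | apply le_refl].
    + apply set_ext; intros x; destruct (classic (N x)); tauto.
Qed.

Lemma mu_null_union (A : nat -> E -> Prop) :
  (forall n, B (A n)) -> (forall n, mu (A n) = Rp0) -> mu (fun x => exists n, A n x) = Rp0.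
Proof.
  intros HA H0; destruct (proj2 Hmu nat A countable_nat HA) as [_ Hleast].
  apply le_antisym; [| apply le0].
  apply Hleast; intros y [j ->]; rewrite H0; apply le_refl.
Qed.

End Maxitive.

Section LevelSets.
Variable c : E -> Rp.
Hypothesis Hc : measurable B c.

Lemma measurable_gt (a : Rp) : B (fun x => Rp_lt a (c x)).
Proof.
  destruct (proj1_sig a) as [al|] eqn:Ea.
  - apply Hc; exists al; exact Ea.
  - apply meas_ext with (fun _ => False); [apply meas_empty |].
    intros x; unfold Rp_lt; rewrite Ea; simpl; tauto.
Qed.

Lemma measurable_ge (a : Rp) : Rp_lt Rp0 a -> B (fun x => Rp_le a (c x)).
Proof.
  intros Hpos; apply meas_ext with (fun x => forall n, Rp_lt (lower a n) (c x)).
  - apply meas_countable_inter; intros n; apply Hc, lower_finite.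
  - intros x; symmetry; apply ge_iff_above_lower, Hpos.
Qed.

End LevelSets.
End SigmaAlgebra.

(** ** ⊙-finite values *)

Section OdotFinite.
Variable odot : Rp -> Rp -> Rp.
Hypothesis odot_assoc : forall a b c, odot (odot a b) c = odot a (odot b c).
Hypothesis odot_mono_l : forall s s' t, Rp_le s s' -> Rp_le (odot s t) (odot s' t).
Hypothesis odot_mono_r : forall s t t', Rp_le t t' -> Rp_le (odot s t) (odot s t').
Hypothesis odot_no_zero_div : forall s t, odot s t = Rp0 -> s = Rp0 \/ t = Rp0.
Hypothesis odot_zero_r : forall t, odot t Rp0 = Rp0.

Lemma finite_zero : odot_finite odot Rp0.
Proof.
  split; [intros y _; apply le0 |].
  intros z Hz; rewrite <- (odot_zero_r RpInf); apply Hz.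
  exists RpInf; split; [exact I | reflexivity].
Qed.

Lemma finite_down (u v : Rp) : Rp_le u v -> odot_finite odot v -> odot_finite odot u.
Proof.
  intros Huv [_ Hv]; split; [intros y _; apply le0 |].
  intros z Hz; apply Hv; intros y [s [hs ->]].
  eapply le_trans; [apply Hz; exists s; split; eauto | apply odot_mono_r, Huv].
Qed.

Lemma nonfinite_pos (a : Rp) : ~ odot_finite odot a -> Rp_lt Rp0 a.
Proof.
  intros Ha; destruct (le_total a Rp0) as [Hle |]; auto.
  exfalso; apply Ha; rewrite (le_antisym a Rp0 Hle (le0 a)); apply finite_zero.
Qed.

Lemma nonfinite_witness (a : Rp) : ~ odot_finite odot a ->
  exists z, (forall s, Rp_lt Rp0 s -> Rp_le z (odot s a)) /\ z <> Rp0.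
Proof.
  intros Ha; apply NNPP; intros Hn; apply Ha; split; [intros y _; apply le0 |].
  intros z Hz; destruct (le_total z Rp0) as [| Hlt]; auto.
  exfalso; apply Hn; exists z; split.
  - intros s hs; apply Hz; eauto.
  - intros ->; exact (lt_not_le _ _ Hlt (le_refl Rp0)).
Qed.

Lemma nonfinite_mul (a u : Rp) :
  ~ odot_finite odot a -> u <> Rp0 -> ~ odot_finite odot (odot a u).
Proof.
  intros Ha Hu [_ Hinf]; destruct (nonfinite_witness a Ha) as [z [Hz Hz0]].
  assert (Hzu : odot z u = Rp0).
  { apply le_antisym; [| apply le0].
    apply Hinf; intros y [s [hs ->]]; rewrite <- odot_assoc; apply odot_mono_l; auto. }
  destruct (odot_no_zero_div _ _ Hzu); contradiction.
Qed.

Lemma nonfinite_annihilates (r u w : Rp) :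
  ~ odot_finite odot r -> Rp_le (odot r u) w -> odot_finite odot w -> u = Rp0.
Proof.
  intros Hr Hle Hw; apply NNPP; intros Hu.
  exact (nonfinite_mul r u Hr Hu (finite_down _ _ Hle Hw)).
Qed.

End OdotFinite.

(** ** Densities and the ⊙-infinite part *)

Section Density.
Variables (E : Type) (B : (E -> Prop) -> Prop) (odot : Rp -> Rp -> Rp)
  (nu tau : (E -> Prop) -> Rp) (c : E -> Rp).
Hypothesis odot_assoc : forall a b c, odot (odot a b) c = odot a (odot b c).
Hypothesis odot_cont_l : forall t s, Rp_lt Rp0 s -> continuous_at (fun s' => odot s' t) s.
Hypothesis odot_mono_l : forall s s' t, Rp_le s s' -> Rp_le (odot s t) (odot s' t).
Hypothesis odot_mono_r : forall s t t', Rp_le t t' -> Rp_le (odot s t) (odot s t').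
Hypothesis odot_no_zero_div : forall s t, odot s t = Rp0 -> s = Rp0 \/ t = Rp0.
Hypothesis odot_zero_r : forall t, odot t Rp0 = Rp0.
Hypothesis HB : sigma_algebra B.
Hypothesis Htau : sigma_maxitive B tau.
Hypothesis Hdens : is_density B odot nu tau c.

Lemma density_bound (A : E -> Prop) (t : Rp) :
  B A -> Rp_finite t -> Rp_le (odot t (tau (fun x => A x /\ Rp_lt t (c x)))) (nu A).
Proof. intros HA Ht; apply (proj1 (proj2 Hdens A HA)); exists t; split; auto. Qed.

Lemma tau_null_strict (A' : E -> Prop) (r : Rp) :
  B A' -> odot_finite odot (nu A') -> Rp_finite r -> ~ odot_finite odot r ->
  tau (fun x => A' x /\ Rp_lt r (c x)) = Rp0.
Proof.
  intros HA' HF Hr Hnr.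
  eapply nonfinite_annihilates; eauto; apply density_bound; auto.
Qed.

(** Same for [{c ≥ a}], using continuity of [s ↦ s ⊙ t] at [a]. *)
Lemma tau_null_ge (A' : E -> Prop) (a : Rp) :
  B A' -> odot_finite odot (nu A') -> ~ odot_finite odot a ->
  tau (fun x => A' x /\ Rp_le a (c x)) = Rp0.
Proof.
  intros HA' HF Ha.
  assert (Hpos : Rp_lt Rp0 a) by (eapply nonfinite_pos; eauto).
  assert (HD : B (fun x => A' x /\ Rp_le a (c x))).
  { apply (meas_inter E B), measurable_ge; auto; apply Hdens. }
  eapply nonfinite_annihilates; eauto.
  apply (continuous_le_of_lower (fun s => odot s _)); auto.
  intros r Hr Hra; eapply le_trans; [| apply (density_bound A' r); auto].
  apply odot_mono_r, (mu_mono E B); auto.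
  - apply (meas_inter E B); auto; apply Hdens, Hr.
  - intros x [H1 H2]; split; [exact H1 | exact (lt_le_trans _ _ _ Hra H2)].
Qed.

Lemma nonfinite_part_negligible :
  exists N : E -> Prop, B N /\ (forall x, N x <-> ~ odot_finite odot (c x)) /\
    forall A', B A' -> odot_finite odot (nu A') -> tau (fun x => A' x /\ N x) = Rp0.
Proof.
  assert (Hc : measurable B c) by apply Hdens.
  destruct (downset_shape (odot_finite odot) (finite_down odot odot_mono_r))
    as [[a Ha] | [a Ha]].
  -
    assert (Hna : ~ odot_finite odot a).
    { intros H; apply Ha in H; exact (lt_not_le _ _ H (le_refl a)). }
    exists (fun x => Rp_le a (c x)); split; [| split].
    + apply measurable_ge; auto; eapply nonfinite_pos; eauto.
    + intros x; rewrite Ha; split; [intros H1 H2; exact (lt_not_le _ _ H2 H1) |].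
      intros H; destruct (le_total a (c x)); tauto.
    + intros A' HA' HF; apply tau_null_ge; auto.
  - destruct (proj1_sig a) as [al|] eqn:Ea.
    + (* ⊙-finite values = [0,al]: take N = {c > al} = ⋃ₙ {c > al + 1/(n+1)} *)
      exists (fun x => Rp_lt a (c x)); split; [| split].
      * apply measurable_gt; auto.
      * intros x; rewrite Ha; split; [intros H1 H2; exact (lt_not_le _ _ H1 H2) |].
        intros H; destruct (le_total (c x) a); tauto.
      * intros A' HA' HF.
        replace (fun x => A' x /\ Rp_lt a (c x)) with
          (fun x => exists n, A' x /\ Rp_lt (clip (al + / (INR n + 1))) (c x)).
        -- apply (mu_null_union E B); auto.
           ++ intros n; apply (meas_inter E B); auto; apply Hc, clip_finite.
           ++ intros n; apply tau_null_strict; auto; [apply clip_finite |].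
              rewrite Ha; apply lt_not_le, below_upper, Ea.
        -- apply set_ext; intros x; rewrite (gt_iff_above_upper a (c x) al Ea).
           split; [intros [n [H1 H2]] | intros [H1 [n H2]]]; eauto.
    +
      assert (Hall : forall x, odot_finite odot x).
      { intros x; apply Ha; unfold Rp_le; rewrite Ea; destruct (proj1_sig x); exact I. }
      exists (fun _ => False); split; [| split].
      * apply (meas_empty E B); auto.
      * intros x; split; [tauto | intros H; exact (H (Hall (c x)))].
      * intros A' _ _; rewrite <- (proj1 Htau); f_equal; apply set_ext; tauto.
Qed.

Lemma density_off_negligible (c' : E -> Rp) (N : E -> Prop) :
  semi_odot_finite B odot nu -> B N ->
  (forall A', B A' -> odot_finite odot (nu A') -> tau (fun x => A' x /\ N x) = Rp0) ->
  (forall t x, Rp_lt t (c' x) <-> Rp_lt t (c x) /\ ~ N x) ->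
  is_density B odot nu tau c'.
Proof.
  intros Hsemi HN Hnull Hlevel.
  assert (Hc : measurable B c) by apply Hdens.
  assert (Hc' : measurable B c').
  { intros t Ht; apply meas_ext with (fun x => Rp_lt t (c x) /\ ~ N x).
    - apply (meas_inter E B); auto; apply (meas_compl E B); auto.
    - intros x; rewrite Hlevel; tauto. }
  split; [exact Hc' | intros A HA; split].
  - (* [c' ≤ c], so each term is bounded by [nu A] *)
    intros y [t [Ht ->]]; eapply le_trans; [| apply (density_bound A t); auto].
    apply odot_mono_r, (mu_mono E B); auto; try (apply (meas_inter E B); auto).
    intros x [H1 H2]; apply Hlevel in H2; tauto.
  - (* on ⊙-finite [A' ⊆ A] the two integrands agree up to a [tau]-null set *)
    intros z Hz; apply (proj2 (Hsemi A HA)); intros y [A' [HA' [HsA [HF ->]]]].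
    apply (proj2 (proj2 Hdens A' HA')); intros y [t [Ht ->]].
    eapply le_trans; [| apply Hz; exists t; split; [exact Ht | reflexivity]].
    apply odot_mono_r.
    set (X := fun x => A' x /\ Rp_lt t (c x)).
    assert (HX : B X) by (apply (meas_inter E B); auto).
    assert (HXN : tau (fun x => X x /\ N x) = Rp0).
    { apply le_antisym; [| apply le0]; rewrite <- (Hnull A' HA' HF).
      apply (mu_mono E B tau Htau (fun x => X x /\ N x) (fun x => A' x /\ N x));
        try (apply (meas_inter E B); auto).
      intros x [[H1 _] H2]; auto. }
    eapply le_trans; [apply (mu_remove_null E B HB tau Htau X N HX HN HXN) |].
    apply (mu_mono E B); auto.
    + apply (meas_inter E B); auto; apply (meas_compl E B); auto.
    + apply (meas_inter E B); auto.
    + intros x [[H1 H2] H3]; split; [auto | apply Hlevel; auto].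
Qed.

End Density.

Theorem mainTheorem4 (odot : Rp -> Rp -> Rp) (E : Type) (e0 : E)
  (B : (E -> Prop) -> Prop) (nu tau : (E -> Prop) -> Rp) (c : E -> Rp) :
  pseudo_mult odot ->
  sigma_algebra B ->
  sigma_maxitive B nu ->
  sigma_maxitive B tau ->
  semi_odot_finite B odot nu ->
  is_density B odot nu tau c ->
  exists c' : E -> Rp, is_density B odot nu tau c' /\
    forall x, odot_finite odot (c' x).
Proof.
  intros (Hassoc & _ & Hcont & Hmono_l & Hmono_r & _ & Hzd & Hzero) HB _ Htau Hsemi Hdens.
  assert (Hzero_r : forall t, odot t Rp0 = Rp0) by (intros t; apply Hzero).
  destruct (nonfinite_part_negligible E B odot nu tau c)
    as [N [HN [HNc Hnull]]]; auto.
  set (c' := fun x => if excluded_middle_informative (odot_finite odot (c x))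
                      then c x else Rp0).
  exists c'; split.
  - apply (density_off_negligible E B odot nu tau c) with N; auto.
    intros t x; unfold c'; rewrite HNc.
    destruct excluded_middle_informative as [Hf | Hf]; [tauto |].
    split; [intros Ht; exfalso; exact (lt_not_le _ _ Ht (le0 t)) | tauto].
  - intros x; unfold c'; destruct excluded_middle_informative; auto.
    apply finite_zero; exact Hzero_r.
Qed.
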